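(* Let $\phi:\mathbb{R}^2_{\ge}\times X\times\Omega\to X$ be a nonautonomous random dynamical system (NRDS) on a probability space $(\Omega,\mathcal{F},\mathbb{P})$ whose state space $X$ is finite. For $t\in\mathbb{R}$ and $\omega\in\Omega$ define \[ A(t,\omega):=\bigcap_{t_0\le t}\phi(t,t_0,X,\omega). \] Then $A(t,\omega)$ is nonempty for all $\omega\in\Omega$, $t\in\mathbb{R}$, and $A$ defines a global random pullback attractor. Moreover, for all $\omega\in\Omega$ and $t\in\mathbb{R}$ there exists $T_0(t,\omega)<t$ such that $\phi(t,t_0,X,\omega)=A(t,\omega)$ for all $t_0\le T_0(t,\omega)$. If, in addition, for each $p\in(0,1)$ there is $T_p>0$ such that \[ \mathbb{P}(\{\omega\in\Omega\mid t-T_0(t,\omega)\le T_p\})\ge p \quad\text{for all } t\in\mathbb{R}, \] then $A$ also defines a global random forward attractor, and for almost every $\omega\in\Omega$ and all $t_0\in\mathbb{R}$ there exists $T(t_0,\omega)>t_0$ such that $\phi(t,t_0,X,\omega)=A(t,\omega)$ for all $t\ge T(t_0,\omega)$.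
   Context: Let $\mathbb{R}^2_{\ge}:=\{(t,s)\in\mathbb{R}^2\mid t\ge s\}$, $(X,d_X)$ a Polish metric space and $(\Omega,\mathcal{F},\mathbb{P})$ a probability space. A map $\phi:\mathbb{R}^2_\ge\times X\times\Omega\to X$ is an NRDS if (i) it is $(\mathcal{B}(\mathbb{R}^2_\ge)\times\mathcal{B}(X)\times\mathcal{F},\mathcal{B}(X))$-measurable; (ii) $\phi(t,t,\cdot,\omega)$ is the identity on $X$ for all $t,\omega$; (iii) (cocycle property) $\phi(t,t_0,x,\omega)=\phi(t,s,\phi(s,t_0,x,\omega),\omega)$ for all $t\ge s\ge t_0$, $x\in X$, $\omega\in\Omega$; (iv) $x\mapsto\phi(t,s,x,\omega)$ is continuous. For $B\subset X$ write $\phi(t,t_0,B,\omega)=\{\phi(t,t_0,x,\omega)\mid x\in B\}$. A finite state space carries the discrete topology and the metric $d(x_1,x_2)=1$ if $x_1\ne x_2$, $0$ otherwise; $\mathrm{dist}(A_1,A_2):=\sup_{a_1\in A_1}\inf_{a_2\in A_2}d(a_1,a_2)$. A nonautonomous random set is a family $(C(t))_{t\in\mathbb{R}}$ of measurable subsets of $X\times\Omega$ (product $\sigma$-algebra), with $\omega$-sections $C(t,\omega)=\{x\mid (x,\omega)\in C(t)\}$; it is compact if every $C(t,\omega)$ is compact. A compact nonautonomous random set $A$ that is strictly $\phi$-invariant, i.e. $\phi(t,t_0,A(t_0,\omega),\omega)=A(t,\omega)$ for all $(t,t_0)\in\mathbb{R}^2_\ge$ a.s., is a global random pullback attractor if for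 each $t\in\mathbb{R}$, $\lim_{t_0\to-\infty}\mathrm{dist}(\phi(t,t_0,X,\omega),A(t,\omega))=0$ a.s.; it is a global random forward attractor if for each $t_0\in\mathbb{R}$, $\lim_{t\to\infty}\mathrm{dist}(\phi(t,t_0,X,\omega),A(t,\omega))=0$ a.s. *)

From HB Require Import structures.
From mathcomp Require Import all_boot all_order all_algebra.
From mathcomp Require Import all_classical all_reals all_analysis.
Set Implicit Arguments. Unset Strict Implicit. Unset Printing Implicit Defensive.
Import Order.TTheory GRing.Theory Num.Theory.
Import numFieldNormedType.Exports.
Local Open Scope classical_set_scope.
Local Open Scope ring_scope.

(* The state space X is a finite (nonempty) type with the
   discrete topology and the discrete metric; Omega is a measurable space with
   a probability P.  An NRDS is given as a total function
   phi : R -> R -> X -> Omega -> X, only its values at t >= s matter. *)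

Section NRDS.
Variables (R : realType) (d : measure_display) (Omega : measurableType d)
  (X : finType).

Definition dX (x1 x2 : X) : R := if x1 == x2 then 0 else 1.

Definition hdist (A1 A2 : set X) : R :=
  sup [set inf [set dX a1 a2 | a2 in A2] | a1 in A1].

Definition img (phi : R -> R -> X -> Omega -> X) (t t0 : R) (B : set X)
  (w : Omega) : set X := [set phi t t0 x w | x in B].

(* (i) measurability of phi w.r.t. B(R^2_>=) x P(X) x F, unfolded for the
   finite discrete space X: for every x, y the set of ((t,s),omega) with t >= s
   and phi(t,s,x,omega) = y is measurable in B(R x R) x F. *)
Definition nrds_measurable (phi : R -> R -> X -> Omega -> X) : Prop :=
  forall x y : X,
    measurable [set p : (R * R) * Omega |
                 p.1.2 <= p.1.1 /\ phi p.1.1 p.1.2 x p.2 = y].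

Definition is_NRDS (phi : R -> R -> X -> Omega -> X) : Prop :=
  [/\ nrds_measurable phi,
      (forall t w x, phi t t x w = x),
      (forall t s t0 x w, t0 <= s -> s <= t ->
          phi t t0 x w = phi t s (phi s t0 x w) w) &
      (* (iv) continuity of x |-> phi(t,s,x,w) holds automatically for
         the discrete topology on the finite X *)
      True].

(* a nonautonomous random set: each C(t) is a measurable subset of X x Omega;
   for finite discrete X this means every x-section is measurable *)
Definition random_set (C : R -> Omega -> set X) : Prop :=
  forall t (x : X), measurable [set w : Omega | C t w x].

(* compactness of C(t,w) is automatic (X finite, discrete) *)

Definition strictly_invariant (P : probability Omega R)
  (phi : R -> R -> X -> Omega -> X) (C : R -> Omega -> set X) : Prop :=
  {ae P, forall w, forall t t0 : R, t0 <= t -> img phi t t0 (C t0 w) w = C t w}.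

Definition pullback_attractor (P : probability Omega R)
  (phi : R -> R -> X -> Omega -> X) (C : R -> Omega -> set X) : Prop :=
  [/\ random_set C, strictly_invariant P phi C &
      forall t : R, {ae P, forall w,
        (fun t0 => hdist (img phi t t0 setT w) (C t w)) @ -oo --> (0 : R)}].

Definition forward_attractor (P : probability Omega R)
  (phi : R -> R -> X -> Omega -> X) (C : R -> Omega -> set X) : Prop :=
  [/\ random_set C, strictly_invariant P phi C &
      forall t0 : R, {ae P, forall w,
        (fun t => hdist (img phi t t0 setT w) (C t w)) @ +oo --> (0 : R)}].

Definition Aset (phi : R -> R -> X -> Omega -> X) (t : R) (w : Omega) : set X :=
  \bigcap_(t0 in [set t0 | t0 <= t]) img phi t t0 setT w.

End NRDS.

From HB Require Import structures.
From mathcomp Require Import all_boot all_order all_algebra.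
From mathcomp Require Import all_classical all_reals all_analysis.
From mathcomp Require Import lra.
Set Implicit Arguments. Unset Strict Implicit. Unset Printing Implicit Defensive.
Import Order.TTheory GRing.Theory Num.Theory.
Import numFieldNormedType.Exports.
Local Open Scope classical_set_scope.
Local Open Scope ring_scope.

(* By the cocycle property the images phi(t,t0,X,w) shrink as t0 decreases.
   As X is finite, each of the finitely many points outside A(t,w) has left
   the image from some time on, so the pullback images are eventually equal
   to A(t,w): this gives nonemptiness, strict invariance and pullback
   attraction at distance zero.  In forward time, once phi(t,s,X,w) = A(t,w),
   invariance keeps phi(t',s,X,w) = A(t',w) for all t' >= t.  The hypothesis
   on T0 says that with probability at least p this happens by time s + T_p;
   letting p tend to 1 it happens almost surely, for each natural s and hence
   for every real s. *)

Lemma inf_lbound_mem (R : realType) (E : set R) (x : R) :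
  E x -> lbound E x -> inf E = x.
Proof.
move=> Ex lbx; apply/le_anti/andP; split; last by apply: lb_le_inf => //; exists x.
by apply: ge_inf => //; exists x.
Qed.

Lemma hdist_refl (R : realType) (X : finType) (A : set X) :
  A !=set0 -> hdist R A A = 0.
Proof.
move=> [a Aa]; rewrite /hdist.
have inf_dX0 a1 : A a1 -> inf [set dX R a1 a2 | a2 in A] = 0.
  move=> Aa1; apply: inf_lbound_mem; first by exists a1; rewrite // /dX eqxx.
  by move=> _ [a2 _ <-]; rewrite /dX; case: ifP.
suff -> : [set inf [set dX R a1 a2 | a2 in A] | a1 in A] = [set 0] by rewrite sup1.
apply/seteqP; split => [_ [a1 Aa1 <-]|_ ->]; first by rewrite /= inf_dX0.
by exists a; rewrite ?inf_dX0.
Qed.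

Lemma cvg_hdist_near_eq (R : realType) (X : finType) (F : set_system R)
    {FF : Filter F} (B A : R -> set X) :
  (forall t, A t !=set0) -> (\forall t \near F, B t = A t) ->
  (fun t => hdist R (B t) (A t)) @ F --> 0.
Proof.
by move=> A0 BA; apply: cvg_near_cst; apply: filterS BA => t ->; exact: hdist_refl.
Qed.

Lemma ae_of_large_subsets (d : measure_display) (T : measurableType d)
    (R : realType) (P : probability T R) (Q : T -> Prop) :
  (forall p : R, 0 < p < 1 ->
     exists G, [/\ measurable G, (p%:E <= P G)%E & G `<=` Q]) ->
  {ae P, forall w, Q w}.
Proof.
move=> largeQ.
pose p k : R := 1 - k.+2%:R^-1.
have p01 k : 0 < p k < 1.
  by rewrite subr_gt0 gtrBl invr_gt0 invf_lt1 ltr0n // ltr1n.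
have /all_sig[G /all_and3[mG PG GQ]] := fun k => cid (largeQ _ (p01 k)).
have mN : measurable (\bigcap_k ~` G k).
  by apply: bigcapT_measurable => k; exact: measurableC.
exists (\bigcap_k ~` G k); split => //; last first.
  by move=> w NQw k _ Gkw; exact: NQw (GQ _ _ Gkw).
apply/eqP; rewrite eq_le measure_ge0 andbT; apply/lee_addgt0Pr => e e0.
have [k ke] := ltr_add_invr e0; rewrite add0r in ke.
have PN_le : (P (\bigcap_i ~` G i) <= P (~` G k))%E.
  by apply: le_measure; rewrite ?inE //; [exact: measurableC | move=> w; apply].
rewrite add0e (le_trans PN_le) // probability_setC //.
rewrite (le_trans (leeB (lexx _) (PG k))) //.
rewrite -EFinB /p subKr lee_fin (le_trans _ (ltW ke)) //.
by rewrite lef_pV2 ?posrE ?ltr0n // ler_nat.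
Qed.

Section Cocycle.
Variables (R : realType) (d : measure_display) (Omega : measurableType d)
  (X : finType) (phi : R -> R -> X -> Omega -> X).
Hypothesis phi_cocycle : forall t s t0 x w, t0 <= s -> s <= t ->
  phi t t0 x w = phi t s (phi s t0 x w) w.

Lemma img_cocycle t s t0 B w : t0 <= s -> s <= t ->
  img phi t t0 B w = img phi t s (img phi s t0 B w) w.
Proof.
move=> t0s st; apply/seteqP; split => x /=.
  by move=> [y By <-]; exists (phi s t0 y w); [exists y | rewrite -phi_cocycle].
by move=> [_ [y By <-] <-]; exists y => //; rewrite -phi_cocycle.
Qed.

Lemma subset_img_setT t s t0 w : t0 <= s -> s <= t ->
  img phi t t0 setT w `<=` img phi t s setT w.
Proof. by move=> t0s st; rewrite (img_cocycle _ _ t0s st) => _ [y _ <-]; exists y. Qed.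

Lemma Aset_sub_img t t0 w : t0 <= t -> Aset phi t w `<=` img phi t t0 setT w.
Proof. by move=> t0t x; apply. Qed.

Lemma img_setT_near_Aset t w :
  \forall t0 \near -oo, img phi t t0 setT w = Aset phi t w.
Proof.
have sub_Aset x : \forall t0 \near -oo, img phi t t0 setT w x -> Aset phi t w x.
  have [Ax|/existsNP[s /not_implyP[st Nx]]] := pselect (Aset phi t w x).
    exact: nearW.
  apply: filterS (nbhs_ninfty_le (num_real s)) => t0 t0s.
  by move=> /(subset_img_setT t0s st) /Nx.
apply: filterS2 (filter_forall _ sub_Aset) (nbhs_ninfty_le (num_real t)).
move=> t0 sub t0t; apply/seteqP; split => [x /sub //|].
exact: Aset_sub_img.
Qed.

Lemma exists_img_setT_eq_Aset t w : exists T0, T0 < t /\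
  forall t0, t0 <= T0 -> img phi t t0 setT w = Aset phi t w.
Proof.
have [M [_ eqA]] := img_setT_near_Aset t w.
exists (Num.min (M - 1) (t - 1)); split => [|t0].
  by rewrite gt_min; apply/orP; right; lra.
by rewrite le_min => /andP[t0M _]; apply: eqA; lra.
Qed.

Lemma Aset_neq0 (x0 : X) t w : Aset phi t w !=set0.
Proof.
have [T0 [_ eqA]] := exists_img_setT_eq_Aset t w.
by rewrite -(eqA T0 (lexx T0)); exists (phi t T0 x0 w), x0.
Qed.

Lemma Aset_invariant t t0 w : t0 <= t ->
  img phi t t0 (Aset phi t0 w) w = Aset phi t w.
Proof.
move=> t0t.
have [s [st0 eqA0 eqA]] : exists s, [/\ s <= t0,
    img phi t0 s setT w = Aset phi t0 w & img phi t s setT w = Aset phi t w].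
  near (ninfty_nbhs R) => s; exists s; split; near: s.
  - exact: nbhs_ninfty_le (num_real t0).
  - exact: img_setT_near_Aset.
  - exact: img_setT_near_Aset.
by rewrite -eqA0 -img_cocycle.
Unshelve. all: by end_near.
Qed.

Lemma img_setT_eq_Aset_forward s t t' w : s <= t -> t <= t' ->
  img phi t s setT w = Aset phi t w -> img phi t' s setT w = Aset phi t' w.
Proof. by move=> st tt' eqA; rewrite (img_cocycle _ _ st tt') eqA Aset_invariant. Qed.

Lemma img_setT_eq_Aset_backward s' s t w : s' <= s -> s <= t ->
  img phi t s setT w = Aset phi t w -> img phi t s' setT w = Aset phi t w.
Proof.
move=> s's st eqA; apply/seteqP; split.
  by rewrite -eqA; exact: subset_img_setT.
by apply: Aset_sub_img; apply: le_trans st.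
Qed.

Lemma Aset_bigcap_nat t w :
  Aset phi t w = \bigcap_n img phi t (t - n%:R) setT w.
Proof.
apply/seteqP; split => x Ax.
  by move=> n _; apply: Ax; rewrite /= lerBlDr lerDl.
move=> t0 t0t; pose n := (Num.truncn (t - t0)).+1.
have nt0 : t - n%:R <= t0 by rewrite /n; have := truncnS_gt (t - t0); lra.
exact: subset_img_setT nt0 t0t _ (Ax n I).
Qed.

Lemma measurable_Aset : nrds_measurable phi -> random_set (Aset phi).
Proof.
move=> mphi t x.
pose S y := [set p : (R * R) * Omega |
  p.1.2 <= p.1.1 /\ phi p.1.1 p.1.2 y p.2 = x].
have img_xsection n : [set w | img phi t (t - n%:R) setT w x] =
    \bigcup_y xsection (S y) (t, t - n%:R).
  have tn : t - n%:R <= t by rewrite lerBlDr lerDl.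
  apply/seteqP; split => w /=; rewrite /xsection.
    by move=> [y _ yx]; exists y => //=; rewrite inE.
  by move=> [y _]; rewrite /= inE => -[_ yx]; exists y.
have -> : [set w | Aset phi t w x] =
    \bigcap_n [set w | img phi t (t - n%:R) setT w x].
  by apply/seteqP; split => w /=; rewrite Aset_bigcap_nat.
apply: bigcapT_measurable => n; rewrite img_xsection.
apply: fin_bigcup_measurable; first exact: finite_finset.
by move=> y _; apply: measurable_xsection; exact: mphi.
Qed.

Definition settles_from t0 w := exists T, t0 < T /\
  forall t, T <= t -> img phi t t0 setT w = Aset phi t w.

Lemma settles_from_le s' s w : s' <= s -> settles_from s w -> settles_from s' w.
Proof.
move=> s's [T [sT eqA]]; exists T; split => [|t Tt].
  exact: le_lt_trans sT.
exact: img_setT_eq_Aset_backward s's (ltW (lt_le_trans sT Tt)) (eqA t Tt).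
Qed.

Lemma ae_settles_from (P : probability Omega R) (T0 : R -> Omega -> R) :
  (forall t w t0, t0 <= T0 t w -> img phi t t0 setT w = Aset phi t w) ->
  (forall p : R, 0 < p < 1 -> exists Tp : R, 0 < Tp /\ forall t : R,
     measurable [set w : Omega | t - T0 t w <= Tp] /\
     (p%:E <= P [set w : Omega | (t - T0 t w <= Tp)%R])%E) ->
  {ae P, forall w t0, settles_from t0 w}.
Proof.
move=> T0_Aset T0_tight.
have settles_nat (n : nat) : {ae P, forall w, settles_from n%:R w}.
  apply: ae_of_large_subsets => p /T0_tight[Tp [Tp0 /(_ (n%:R + Tp))[mG PG]]].
  exists [set w | n%:R + Tp - T0 (n%:R + Tp) w <= Tp]; split => // w /= Gw.
  exists (n%:R + Tp); split => [|t Tt]; first by rewrite ltrDl.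
  apply: (img_setT_eq_Aset_forward _ Tt); first by rewrite lerDl ltW.
  by apply: T0_Aset; lra.
apply: filterS (ae_foralln settles_nat) => w settles t0.
exact: settles_from_le (ltW (truncnS_gt t0)) (settles _).
Qed.

End Cocycle.

Theorem theorem6 (R : realType) (d : measure_display) (Omega : measurableType d)
  (P : probability Omega R) (X : finType) (x0 : X)
  (phi : R -> R -> X -> Omega -> X) :
  is_NRDS phi ->
  [/\ (forall (t : R) (w : Omega), Aset phi t w !=set0),
      pullback_attractor P phi (Aset phi),
      (forall (w : Omega) (t : R), exists T0 : R,
          T0 < t /\ forall t0 : R, t0 <= T0 -> img phi t t0 setT w = Aset phi t w) &
      (forall T0 : R -> Omega -> R,
         (forall (t : R) (w : Omega), T0 t w < t /\
            forall t0 : R, t0 <= T0 t w -> img phi t t0 setT w = Aset phi t w) ->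
         (forall p : R, 0 < p < 1 -> exists Tp : R, 0 < Tp /\
            forall t : R,
              measurable [set w : Omega | t - T0 t w <= Tp] /\
              (p%:E <= P [set w : Omega | (t - T0 t w <= Tp)%R])%E) ->
         forward_attractor P phi (Aset phi) /\
         {ae P, forall w, forall t0 : R, exists T : R, t0 < T /\
            forall t : R, T <= t -> img phi t t0 setT w = Aset phi t w})].
Proof.
case=> mphi _ cocycle _.
have A0 t w : Aset phi t w !=set0 := Aset_neq0 cocycle x0 t w.
have invA : strictly_invariant P phi (Aset phi).
  by apply: aeW => w t t0; exact: Aset_invariant.
have rsA := measurable_Aset cocycle mphi.
split => //.
- split => // t; apply: aeW => w.
  by apply: cvg_hdist_near_eq => //; exact: img_setT_near_Aset.
- by move=> w t; exact: exists_img_setT_eq_Aset.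
move=> T0 T0_Aset T0_tight.
have settles := ae_settles_from cocycle (fun t w => (T0_Aset t w).2) T0_tight.
split => //; split => // t0.
apply: filterS settles => w /(_ t0)[T [_ eqA]].
apply: cvg_hdist_near_eq => //.
exact: filterS eqA (nbhs_pinfty_ge (num_real T)).
Qed.
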